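(* Let $l,m\ge0$ be integers with $l+m\ge1$. There exist real constants $\tilde\alpha_{l,m},\tilde\beta_{l,m},\tilde\gamma_{l,m},\tilde\delta_{l,m}$ and, for each index $k$ below, real polynomials in $h$ of the indicated degrees (depending only on $l,m,k$) such that for all $h\in(0,+\infty)$, writing $w=w(h)=\frac{\sqrt{1+4h}-1}{2}$: (i) if $n=2l+2m$, then $J_{2l,2m}(h)=\tilde\gamma_{l,m}h^{[n/2]}J_{0,0}(h)+\sum_{k=2}^{n}\hat\varphi_k(h)\,w^{k+\frac12}$ with $\deg\hat\varphi_k\le[\frac{n-k}{2}]$; (ii) if $n=2l+2m+1$, then $I_{2l,2m+1}(h)=\tilde\alpha_{l,m}h^{[\frac{n-1}{2}]}I_{0,1}(h)+\sum_{k=3}^{n}\tilde\varphi_k(h)\,w^{k+\frac12}$ and $J_{2l,2m+1}(h)=\tilde\delta_{l,m}h^{[\frac{n-1}{2}]}J_{0,1}(h)+\sum_{k=3}^{n}\tilde\psi_k(h)\,w^{k+\frac12}$, with $\deg\tilde\varphi_k,\deg\tilde\psi_k\le[\frac{n-k}{2}]$; (iii) if $n=2l+2m+2$, then $I_{2l+1,2m+1}(h)=\tilde\beta_{l,m}h^{[\frac{n-2}{2}]}I_{1,1}(h)+\sum_{k=4}^{n}\check\psi_k(h)\,w^{k}$ with $\deg\check\psi_k\le[\frac{n-k}{2}]$.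
   Context: For $h>0$ let $u=\sqrt{(\sqrt{1+4h}-1)/2}$ (so $u^4+u^2=h$), $\Gamma_h$ the circle $x^2+y^2=h$, $A=(u,u^2)$, $B=(u,-u^2)$, $C=(-u,-u^2)$. Let $\widehat{AB}$ be the arc of $\Gamma_h$ traversed clockwise from $A$ to $B$ through $(\sqrt h,0)$, and $\widehat{BC}$ the arc traversed clockwise from $B$ to $C$ through $(0,-\sqrt h)$. For integers $i,j\ge0$, $I_{i,j}(h)=\int_{\widehat{AB}}x^iy^jdx$ and $J_{i,j}(h)=\int_{\widehat{BC}}x^iy^jdx$ (line integrals along the oriented arcs). $[p]$ denotes the integer part of $p$. *)

From Stdlib Require Import Reals Lra Lia ClassicalEpsilon.
Open Scope R_scope.

(* Riemann integral of f over [a,b] (signed, as Stdlib's RiemannInt);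
   the value is the common value of RiemannInt over all integrability proofs
   (independent of the proof by RiemannInt_P5). *)
Definition RInt (f : R -> R) (a b : R) : R :=
  epsilon (inhabits 0) (fun l => exists pr : Riemann_integrable f a b, RiemannInt pr = l).

(* u = sqrt((sqrt(1+4h)-1)/2), so u^4+u^2 = h *)
Definition wfun (h : R) : R := (sqrt (1 + 4 * h) - 1) / 2.
Definition ufun (h : R) : R := sqrt (wfun h).

(* Clockwise parametrization of Gamma_h : gamma(s) = (sqrt h cos s, - sqrt h sin s),
   s increasing.  A = gamma(-atan u), B = gamma(atan u), C = gamma(PI - atan u);
   (sqrt h,0) = gamma 0 and (0,-sqrt h) = gamma(PI/2). *)
Definition gx (h s : R) : R := sqrt h * cos s.
Definition gy (h s : R) : R := - (sqrt h * sin s).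
Definition dgx (h s : R) : R := - (sqrt h * sin s).

Definition arc_int (i j : nat) (h a b : R) : R :=
  RInt (fun s => gx h s ^ i * gy h s ^ j * dgx h s) a b.

Definition I_ij (i j : nat) (h : R) : R :=
  arc_int i j h (- atan (ufun h)) (atan (ufun h)).
Definition J_ij (i j : nat) (h : R) : R :=
  arc_int i j h (atan (ufun h)) (PI - atan (ufun h)).

Definition polyR (c : nat -> R) (d : nat) (h : R) : R :=
  sum_f_R0 (fun j => c j * h ^ j) d.

(* The arcs are parametrized by s |-> (sqrt h cos s, - sqrt h sin s), so that
   x' = y, y' = -x and dx = y ds.  Three elementary identities drive
   everything:
   - x^2 = h - y^2 lowers the x-exponent by 2 ([arc_int_x2]);
   - d(x y^(j+2)) = ((j+3) y^(j+2) - (j+2) h y^j) dx lowers the y-exponent by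
     2 up to a boundary term ([arc_int_y_step]);
   - x y^j dx = -d(y^(j+2))/(j+2) is exact ([arc_int_xy_exact]).
   At the endpoints x = +-sqrt w, y = +-w with w^2 + w = h, so boundary terms
   are +-2 w^N sqrt w.  The remainders are tracked in the class [WPoly a n] of
   combinations of monomials h^i w^k with a <= k and 2i + k <= n, which is
   closed under the operations of the recursions and coincides with the
   polynomial normal form of the statement ([WPoly_normal_form]). *)

From Pilot Require Import Defs.
From Stdlib Require Import Reals Lra Lia ClassicalEpsilon ZifyNat.
From Coquelicot Require Import Coquelicot.
From Stdlib Require Import List.
Open Scope R_scope.

Definition arc_fun (i j : nat) (h s : R) : R := gx h s ^ i * gy h s ^ j * dgx h s.

Lemma arc_fun_continuous i j h s : continuous (arc_fun i j h) s.
Proof.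
  apply (ex_derive_continuous (K := R_AbsRing) (V := R_NormedModule)).
  unfold arc_fun, gx, gy, dgx. auto_derive. exact I.
Qed.

Lemma arc_fun_ex_RInt i j h a b : ex_RInt (arc_fun i j h) a b.
Proof.
  apply (ex_RInt_continuous (V := R_CompleteNormedModule)).
  intros; apply arc_fun_continuous.
Qed.

Lemma Defs_RInt_continuous (f : R -> R) (a b : R) :
  (forall x, continuous f x) -> Defs.RInt f a b = RInt f a b.
Proof.
  intros Hc.
  assert (Hex : ex_RInt f a b)
    by (apply (ex_RInt_continuous (V := R_CompleteNormedModule)); auto).
  pose proof (ex_RInt_Reals_0 _ _ _ Hex) as pr.
  unfold Defs.RInt.
  destruct (epsilon_spec (inhabits 0)
              (fun l => exists pr : Riemann_integrable f a b, RiemannInt pr = l))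
    as [pr' Hpr'].
  { exists (RiemannInt pr), pr; reflexivity. }
  rewrite <- Hpr', (RInt_Reals f a b pr). apply RiemannInt_P5.
Qed.

Lemma arc_int_RInt i j h a b : arc_int i j h a b = RInt (arc_fun i j h) a b.
Proof. apply Defs_RInt_continuous. intro; apply arc_fun_continuous. Qed.

Lemma arc_int_comb c1 c2 i1 j1 i2 j2 h a b :
  c1 * arc_int i1 j1 h a b + c2 * arc_int i2 j2 h a b
  = RInt (fun s => c1 * arc_fun i1 j1 h s + c2 * arc_fun i2 j2 h s) a b.
Proof.
  rewrite !arc_int_RInt.
  rewrite (RInt_plus (V := R_CompleteNormedModule)
             (fun s => scal c1 (arc_fun i1 j1 h s)) (fun s => scal c2 (arc_fun i2 j2 h s))).
  - rewrite !(RInt_scal (V := R_CompleteNormedModule)) by apply arc_fun_ex_RInt.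
    reflexivity.
  - apply (ex_RInt_scal (V := R_CompleteNormedModule)), arc_fun_ex_RInt.
  - apply (ex_RInt_scal (V := R_CompleteNormedModule)), arc_fun_ex_RInt.
Qed.

Lemma arc_comb_continuous c1 c2 i1 j1 i2 j2 h s :
  continuous (fun s => c1 * arc_fun i1 j1 h s + c2 * arc_fun i2 j2 h s) s.
Proof.
  apply (ex_derive_continuous (K := R_AbsRing) (V := R_NormedModule)).
  unfold arc_fun, gx, gy, dgx. auto_derive. exact I.
Qed.

Lemma arc_int_scal c i j h a b :
  c * arc_int i j h a b = RInt (fun s => c * arc_fun i j h s) a b.
Proof.
  rewrite arc_int_RInt.
  symmetry. exact (RInt_scal (V := R_CompleteNormedModule) _ a b c (arc_fun_ex_RInt i j h a b)).
Qed.

(* [RInt_ext] for real functions, stated for all points so that the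
   pointwise goal is an equation in [R] (amenable to [ring]). *)
Lemma RInt_ext_R (f g : R -> R) a b : (forall s, f s = g s) -> RInt f a b = RInt g a b.
Proof. intros E. apply RInt_ext. intros s _. apply E. Qed.

Lemma RInt_antiderivative (F f : R -> R) a b :
  (forall s, is_derive F s (f s)) -> (forall s, continuous f s) ->
  RInt f a b = F b - F a.
Proof.
  intros Hd Hc. apply is_RInt_unique.
  apply (is_RInt_derive (V := R_CompleteNormedModule)); auto.
Qed.

Lemma gx_derive h s : is_derive (gx h) s (gy h s).
Proof. unfold gx, gy. auto_derive; [exact I | ring]. Qed.

Lemma gy_derive h s : is_derive (gy h) s (- gx h s).
Proof. unfold gx, gy. auto_derive; [exact I | ring]. Qed.

Lemma on_circle h s : 0 <= h -> gx h s ^ 2 + gy h s ^ 2 = h.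
Proof.
  intros Hh. unfold gx, gy.
  pose proof (sin2_cos2 s) as E. unfold Rsqr in E.
  pose proof (sqrt_sqrt h Hh) as E2.
  replace ((sqrt h * cos s) ^ 2 + (- (sqrt h * sin s)) ^ 2)
    with ((sqrt h * sqrt h) * (sin s * sin s + cos s * cos s)) by ring.
  rewrite E, E2. ring.
Qed.

(* Reduction in x: on the circle x^2 = h - y^2. *)
Lemma arc_int_x2 i j h a b : 0 <= h ->
  arc_int (i + 2) j h a b = h * arc_int i j h a b - arc_int i (j + 2) h a b.
Proof.
  intros Hh.
  replace (h * arc_int i j h a b - arc_int i (j + 2) h a b)
    with (h * arc_int i j h a b + (-1) * arc_int i (j + 2) h a b) by ring.
  rewrite arc_int_comb, arc_int_RInt.
  apply RInt_ext_R. intros s. unfold arc_fun.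
  pose proof (on_circle h s Hh) as C. change (dgx h s) with (gy h s).
  set (X := gx h s) in *. set (Y := gy h s) in *. clearbody X Y.
  rewrite !pow_add, <- C. ring.
Qed.

(* Reduction in y: d/ds (x y^(j+2)) = (j+3) y^(j+3) - (j+2) h y^(j+1),
   the two integrands of [arc_int 0 (j+2)] and [arc_int 0 j]. *)
Lemma arc_int_y_step j h a b : 0 <= h ->
  INR (j + 3) * arc_int 0 (j + 2) h a b - INR (j + 2) * h * arc_int 0 j h a b
  = gx h b * gy h b ^ (j + 2) - gx h a * gy h a ^ (j + 2).
Proof.
  intros Hh.
  replace (INR (j + 3) * arc_int 0 (j + 2) h a b - INR (j + 2) * h * arc_int 0 j h a b)
    with (INR (j + 3) * arc_int 0 (j + 2) h a b + (- (INR (j + 2) * h)) * arc_int 0 j h a b)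
    by ring.
  rewrite arc_int_comb.
  apply (RInt_antiderivative (fun s => gx h s * gy h s ^ (j + 2))).
  - intros s. cbv beta.
    replace (INR (j + 3) * arc_fun 0 (j + 2) h s + - (INR (j + 2) * h) * arc_fun 0 j h s)
      with (gy h s * gy h s ^ (j + 2)
            + gx h s * (INR (j + 2) * - gx h s * gy h s ^ Init.Nat.pred (j + 2))).
    + apply (is_derive_mult (gx h) (fun s => gy h s ^ (j + 2))).
      * apply gx_derive.
      * apply is_derive_pow, gy_derive.
      * intros; apply Rmult_comm.
    + unfold arc_fun. change (dgx h s) with (gy h s).
      pose proof (on_circle h s Hh) as C.
      set (X := gx h s) in *. set (Y := gy h s) in *. clearbody X Y.
      replace (Init.Nat.pred (j + 2)) with (j + 1)%nat by lia.
      rewrite <- C, !plus_INR; simpl INR. rewrite !pow_add. ring.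
  - intros s. apply arc_comb_continuous.
Qed.

(* The integrand of [arc_int 1 j] is exact: d/ds (- y^(j+2)) = (j+2) x y^(j+1). *)
Lemma arc_int_xy_exact j h a b :
  INR (j + 2) * arc_int 1 j h a b = gy h a ^ (j + 2) - gy h b ^ (j + 2).
Proof.
  rewrite arc_int_scal, (RInt_antiderivative (fun s => - gy h s ^ (j + 2))); [ring | |].
  - intros s. cbv beta.
    replace (INR (j + 2) * arc_fun 1 j h s)
      with (- (INR (j + 2) * - gx h s * gy h s ^ Init.Nat.pred (j + 2))).
    + apply (is_derive_opp (fun s => gy h s ^ (j + 2))), is_derive_pow, gy_derive.
    + unfold arc_fun. change (dgx h s) with (gy h s).
      replace (Init.Nat.pred (j + 2)) with (j + 1)%nat by lia.
      rewrite !pow_add. ring.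
  - intros s.
    apply (ex_derive_continuous (K := R_AbsRing) (V := R_NormedModule)).
    unfold arc_fun, gx, gy, dgx. auto_derive. exact I.
Qed.

Lemma wfun_pos h : 0 < h -> 0 < wfun h.
Proof.
  intros Hh. unfold wfun.
  assert (H1 : sqrt 1 < sqrt (1 + 4 * h)) by (apply sqrt_lt_1_alt; lra).
  rewrite sqrt_1 in H1. lra.
Qed.

Lemma wfun_quadratic h : 0 < h -> wfun h ^ 2 + wfun h = h.
Proof.
  intros Hh. unfold wfun.
  assert (E : sqrt (1 + 4 * h) * sqrt (1 + 4 * h) = 1 + 4 * h) by (apply sqrt_sqrt; lra).
  set (r := sqrt (1 + 4 * h)) in *. nra.
Qed.

Lemma sqrt_h_factor h : 0 < h -> sqrt h = sqrt (wfun h) * sqrt (1 + wfun h).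
Proof.
  intros Hh. pose proof (wfun_pos h Hh). pose proof (wfun_quadratic h Hh).
  rewrite <- sqrt_mult by lra. f_equal. lra.
Qed.

Definition theta (h : R) : R := atan (ufun h).

Lemma gx_theta h : 0 < h -> gx h (theta h) = sqrt (wfun h).
Proof.
  intros Hh. pose proof (wfun_pos h Hh) as Hw.
  unfold gx, theta, ufun. rewrite cos_atan, Rsqr_sqrt by lra.
  rewrite (sqrt_h_factor h Hh).
  assert (0 < sqrt (1 + wfun h)) by (apply sqrt_lt_R0; lra).
  field. lra.
Qed.

Lemma gy_theta h : 0 < h -> gy h (theta h) = - wfun h.
Proof.
  intros Hh. pose proof (wfun_pos h Hh) as Hw.
  unfold gy, theta, ufun. rewrite sin_atan, Rsqr_sqrt by lra.
  rewrite (sqrt_h_factor h Hh).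
  assert (0 < sqrt (1 + wfun h)) by (apply sqrt_lt_R0; lra).
  field_simplify; [| lra]. rewrite <- Rsqr_pow2, Rsqr_sqrt by lra. reflexivity.
Qed.

Lemma gx_opp h s : gx h (- s) = gx h s.
Proof. unfold gx. rewrite cos_neg. reflexivity. Qed.

Lemma gy_opp h s : gy h (- s) = - gy h s.
Proof. unfold gy. rewrite sin_neg. ring. Qed.

Lemma gx_PI_minus h s : gx h (PI - s) = - gx h s.
Proof. unfold gx. rewrite cos_minus, cos_PI, sin_PI. ring. Qed.

Lemma gy_PI_minus h s : gy h (PI - s) = gy h s.
Proof. unfold gy. rewrite sin_minus, cos_PI, sin_PI. ring. Qed.

Lemma pow_opp_even x n : (- x) ^ (2 * n) = x ^ (2 * n).
Proof. rewrite !pow_mult. f_equal. ring. Qed.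

Lemma pow_opp_odd x n : (- x) ^ (2 * n + 1) = - x ^ (2 * n + 1).
Proof. rewrite !pow_add, pow_opp_even. ring. Qed.

Lemma boundary_AB h N : 0 < h ->
  gx h (theta h) * gy h (theta h) ^ N - gx h (- theta h) * gy h (- theta h) ^ N
  = sqrt (wfun h) * ((- wfun h) ^ N - wfun h ^ N).
Proof.
  intros Hh. rewrite gx_opp, gy_opp, gx_theta, gy_theta by exact Hh.
  replace (- - wfun h) with (wfun h) by ring. ring.
Qed.

Lemma boundary_BC h N : 0 < h ->
  gx h (PI - theta h) * gy h (PI - theta h) ^ N - gx h (theta h) * gy h (theta h) ^ N
  = -2 * (- wfun h) ^ N * sqrt (wfun h).
Proof.
  intros Hh. rewrite gx_PI_minus, gy_PI_minus, gx_theta, gy_theta by exact Hh. ring.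
Qed.

Lemma boundary_AB_odd h M : 0 < h ->
  gx h (theta h) * gy h (theta h) ^ (2 * M + 1)
  - gx h (- theta h) * gy h (- theta h) ^ (2 * M + 1)
  = -2 * wfun h ^ (2 * M + 1) * sqrt (wfun h).
Proof. intros Hh. rewrite boundary_AB, pow_opp_odd by exact Hh. ring. Qed.

Lemma boundary_BC_even h M : 0 < h ->
  gx h (PI - theta h) * gy h (PI - theta h) ^ (2 * M + 0)
  - gx h (theta h) * gy h (theta h) ^ (2 * M + 0)
  = -2 * wfun h ^ (2 * M + 0) * sqrt (wfun h).
Proof. intros Hh. rewrite boundary_BC, Nat.add_0_r, pow_opp_even by exact Hh. ring. Qed.

Lemma boundary_BC_odd h M : 0 < h ->
  gx h (PI - theta h) * gy h (PI - theta h) ^ (2 * M + 1)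
  - gx h (theta h) * gy h (theta h) ^ (2 * M + 1)
  = 2 * wfun h ^ (2 * M + 1) * sqrt (wfun h).
Proof. intros Hh. rewrite boundary_BC, pow_opp_odd by exact Hh. ring. Qed.

Definition monomial : Type := (R * nat * nat)%type.

Fixpoint eval_monomials (L : list monomial) (h : R) : R :=
  match L with
  | nil => 0
  | (r, i, k) :: L' => r * h ^ i * wfun h ^ k + eval_monomials L' h
  end.

Definition admissible (a n : nat) (t : monomial) : Prop :=
  let '(_, i, k) := t in (a <= k /\ 2 * i + k <= n)%nat.

Definition WPoly (a n : nat) (F : R -> R) : Prop :=
  exists L, Forall (admissible a n) L /\ forall h, F h = eval_monomials L h.

Lemma WPoly_ext a n F G : WPoly a n F -> (forall h, F h = G h) -> WPoly a n G.
Proof. intros [L [HL HF]] E. exists L; split; [exact HL |]. intros h; rewrite <- E; auto. Qed.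

Lemma WPoly_zero a n : WPoly a n (fun _ => 0).
Proof. exists nil; split; [constructor | reflexivity]. Qed.

Lemma WPoly_monomial a n c k : (a <= k <= n)%nat -> WPoly a n (fun h => c * wfun h ^ k).
Proof.
  intros Hk. exists ((c, 0%nat, k) :: nil). split.
  - constructor; [simpl; lia | constructor].
  - intros h; simpl; ring.
Qed.

Lemma WPoly_weaken a n n' F : (n <= n')%nat -> WPoly a n F -> WPoly a n' F.
Proof.
  intros Hn [L [HL E]]. exists L; split; [| exact E].
  eapply Forall_impl; [| exact HL]. intros [[r i] k]; simpl; lia.
Qed.

Lemma eval_monomials_app L1 L2 h :
  eval_monomials (L1 ++ L2) h = eval_monomials L1 h + eval_monomials L2 h.
Proof. induction L1 as [| [[r i] k] L IH]; simpl; [ring | rewrite IH; ring]. Qed.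

Lemma WPoly_add a n F G : WPoly a n F -> WPoly a n G -> WPoly a n (fun h => F h + G h).
Proof.
  intros [L1 [H1 E1]] [L2 [H2 E2]]. exists (L1 ++ L2). split.
  - apply Forall_app; auto.
  - intros h. rewrite eval_monomials_app, E1, E2. reflexivity.
Qed.

Lemma WPoly_scal a n c F : WPoly a n F -> WPoly a n (fun h => c * F h).
Proof.
  intros [L [HL E]].
  exists (map (fun t : monomial => let '(r, i, k) := t in (c * r, i, k)) L). split.
  - apply Forall_map. eapply Forall_impl; [| exact HL]. intros [[r i] k]; auto.
  - intros h. rewrite E. clear E HL.
    induction L as [| [[r i] k] L IH]; simpl; [ring | rewrite <- IH; ring].
Qed.

Lemma WPoly_sub a n F G : WPoly a n F -> WPoly a n G -> WPoly a n (fun h => F h - G h).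
Proof.
  intros HF HG. eapply WPoly_ext; [apply (WPoly_add _ _ _ _ HF (WPoly_scal _ _ (-1) _ HG)) |].
  intros h; simpl; ring.
Qed.

Lemma WPoly_mul_h a n F : WPoly a n F -> WPoly a (n + 2) (fun h => h * F h).
Proof.
  intros [L [HL E]].
  exists (map (fun t : monomial => let '(r, i, k) := t in (r, S i, k)) L). split.
  - apply Forall_map. eapply Forall_impl; [| exact HL]. intros [[r i] k]; simpl; lia.
  - intros h. rewrite E. clear E HL.
    induction L as [| [[r i] k] L IH]; simpl; [ring | rewrite <- IH; ring].
Qed.

Lemma sum_f_R0_single (f : nat -> R) i N :
  (forall j, j <> i -> f j = 0) -> (i <= N)%nat -> sum_f_R0 f N = f i.
Proof.
  intros Hf. induction N as [| N IH]; intros Hi; simpl.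
  - replace i with 0%nat by lia. reflexivity.
  - destruct (Nat.eq_dec i (S N)) as [-> | Hne].
    + rewrite sum_eq_R0; [ring |]. intros j Hj. apply Hf. lia.
    + rewrite IH, (Hf (S N)) by lia. ring.
Qed.

Definition normal_form (a n : nat) (c : nat -> nat -> R) (h : R) : R :=
  sum_f a n (fun k => polyR (c k) ((n - k) / 2) h * wfun h ^ k).

Lemma normal_form_zero a n h : normal_form a n (fun _ _ => 0) h = 0.
Proof.
  unfold normal_form, sum_f, polyR. apply sum_eq_R0. intros k _.
  rewrite sum_eq_R0; [ring |]. intros; ring.
Qed.

Lemma normal_form_add a n c1 c2 h :
  normal_form a n (fun k j => c1 k j + c2 k j) h = normal_form a n c1 h + normal_form a n c2 h.
Proof.
  unfold normal_form, sum_f, polyR. rewrite <- plus_sum. apply sum_eq. intros k _.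
  rewrite <- Rmult_plus_distr_r, <- plus_sum. f_equal. apply sum_eq. intros; ring.
Qed.

Lemma normal_form_monomial a n r i k h : (a <= k)%nat -> (2 * i + k <= n)%nat ->
  normal_form a n (fun k' j => if andb (Nat.eqb k' k) (Nat.eqb j i) then r else 0) h
  = r * h ^ i * wfun h ^ k.
Proof.
  intros Hak Hn. unfold normal_form, sum_f.
  rewrite (sum_f_R0_single _ (k - a)); [| | lia].
  - replace (k - a + a)%nat with k by lia. unfold polyR.
    rewrite (sum_f_R0_single _ i); [| | lia].
    + rewrite !Nat.eqb_refl. simpl. ring.
    + intros j Hj. rewrite Nat.eqb_refl. apply Nat.eqb_neq in Hj. rewrite Hj. simpl. ring.
  - intros j Hj. unfold polyR. rewrite sum_eq_R0; [ring |]. intros j' _.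
    replace (Nat.eqb (j + a) k) with false by (symmetry; apply Nat.eqb_neq; lia). simpl. ring.
Qed.

Lemma WPoly_normal_form a n F : WPoly a n F -> exists c, forall h, F h = normal_form a n c h.
Proof.
  intros [L [HL E]].
  enough (Hc : exists c, forall h, eval_monomials L h = normal_form a n c h).
  { destruct Hc as [c Hc]. exists c. intros h. rewrite E. apply Hc. }
  clear E. induction HL as [| [[r i] k] L' Hadm _ [c Hc]].
  - exists (fun _ _ => 0). intros h. rewrite normal_form_zero. reflexivity.
  - destruct Hadm as [Hak Hn].
    exists (fun k' j => (if andb (Nat.eqb k' k) (Nat.eqb j i) then r else 0) + c k' j).
    intros h. rewrite normal_form_add, normal_form_monomial, <- Hc by assumption. reflexivity.
Qed.

Lemma WPoly_normal_form_factor a n F (factor : R -> R) : WPoly a n F ->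
  exists c, forall h,
    F h * factor h = sum_f a n (fun k => polyR (c k) ((n - k) / 2) h * (wfun h ^ k * factor h)).
Proof.
  intros HF. destruct (WPoly_normal_form a n F HF) as [c Hc]. exists c. intros h.
  rewrite Hc. unfold normal_form, sum_f. rewrite Rmult_comm, scal_sum.
  apply sum_eq. intros; ring.
Qed.

Lemma y_moments (p : nat) (ea eb : R -> R) (sg : R)
  (boundary : forall h M, 0 < h ->
     gx h (eb h) * gy h (eb h) ^ (2 * M + p) - gx h (ea h) * gy h (ea h) ^ (2 * M + p)
     = sg * wfun h ^ (2 * M + p) * sqrt (wfun h)) :
  forall m, exists al G, WPoly (p + 2) (2 * m + p) G /\ forall h, 0 < h ->
    arc_int 0 (2 * m + p) h (ea h) (eb h)
    = al * h ^ m * arc_int 0 p h (ea h) (eb h) + G h * sqrt (wfun h).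
Proof.
  induction m as [| m [al [G [HG HE]]]].
  - exists 1, (fun _ => 0). split; [apply WPoly_zero |]. intros h _. simpl. ring.
  - set (c3 := INR (2 * m + p + 3)). set (c2 := INR (2 * S m + p)).
    assert (Hc3 : 0 < c3) by (apply lt_0_INR; lia).
    exists (al * c2 / c3), (fun h => c2 / c3 * (h * G h) + sg / c3 * wfun h ^ (2 * S m + p)).
    split.
    + apply WPoly_add.
      * apply WPoly_scal. apply (WPoly_weaken _ (2 * m + p + 2)); [lia |].
        apply WPoly_mul_h, HG.
      * apply WPoly_monomial. lia.
    + intros h Hh.
      pose proof (arc_int_y_step (2 * m + p) h (ea h) (eb h) (Rlt_le _ _ Hh)) as Hstep.
      replace (2 * m + p + 2)%nat with (2 * S m + p)%nat in Hstep by lia.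
      rewrite boundary, HE in Hstep by exact Hh. fold c3 c2 in Hstep.
      apply (Rmult_eq_reg_l c3); [| lra].
      replace (c3 * arc_int 0 (2 * S m + p) h (ea h) (eb h))
        with (sg * wfun h ^ (2 * S m + p) * sqrt (wfun h)
              + c2 * h * (al * h ^ m * arc_int 0 p h (ea h) (eb h) + G h * sqrt (wfun h)))
        by lra.
      simpl pow. field. lra.
Qed.

Lemma x_reduction (q p N a : nat) (ea eb B factor : R -> R)
  (base : forall m, exists al G, WPoly a (2 * m + N) G /\ forall h, 0 < h ->
     arc_int q (2 * m + p) h (ea h) (eb h) = al * h ^ m * B h + G h * factor h) :
  forall l m, exists al G, WPoly a (2 * l + 2 * m + N) G /\ forall h, 0 < h ->
    arc_int (2 * l + q) (2 * m + p) h (ea h) (eb h) = al * h ^ (l + m) * B h + G h * factor h.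
Proof.
  induction l as [| l IH]; intros m; [exact (base m) |].
  destruct (IH m) as [al1 [G1 [HG1 HE1]]].
  destruct (IH (S m)) as [al2 [G2 [HG2 HE2]]].
  exists (al1 - al2), (fun h => h * G1 h - G2 h). split.
  - apply WPoly_sub.
    + apply (WPoly_weaken _ (2 * l + 2 * m + N + 2)); [lia |]. apply WPoly_mul_h, HG1.
    + apply (WPoly_weaken _ (2 * l + 2 * S m + N)); [lia | exact HG2].
  - intros h Hh.
    replace (2 * S l + q)%nat with (2 * l + q + 2)%nat by lia.
    rewrite arc_int_x2 by lra.
    replace (2 * m + p + 2)%nat with (2 * S m + p)%nat by lia.
    rewrite HE1, HE2 by exact Hh.
    replace (S l + m)%nat with (S (l + m)) by lia.
    replace (l + S m)%nat with (S (l + m)) by lia.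
    simpl pow. ring.
Qed.

(* Odd powers of w reduce to w^3 through w^2 = h - w. *)
Lemma wfun_odd_power M : exists G, WPoly 4 (2 * M + 2) G /\ forall h, 0 < h ->
  wfun h ^ (2 * M + 3) = h ^ M * wfun h ^ 3 + G h.
Proof.
  induction M as [| M [G [HG HE]]].
  - exists (fun _ => 0). split; [apply WPoly_zero |]. intros h _. simpl. ring.
  - exists (fun h => h * G h - 1 * wfun h ^ (2 * M + 4)). split.
    + apply WPoly_sub.
      * apply (WPoly_weaken _ (2 * M + 2 + 2)); [lia |]. apply WPoly_mul_h, HG.
      * apply WPoly_monomial. lia.
    + intros h Hh. pose proof (wfun_quadratic h Hh) as Hw.
      replace (2 * S M + 3)%nat with (2 * M + 3 + 2)%nat by lia.
      replace (2 * M + 4)%nat with (2 * M + 3 + 1)%nat by lia.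
      rewrite (pow_add _ (2 * M + 3) 2), (pow_add _ (2 * M + 3) 1), HE by exact Hh.
      replace (wfun h ^ 2) with (h - wfun h) by lra. simpl pow. ring.
Qed.

Lemma xy_moment_AB m h : 0 < h ->
  INR (2 * m + 3) * arc_int 1 (2 * m + 1) h (- theta h) (theta h) = 2 * wfun h ^ (2 * m + 3).
Proof.
  intros Hh.
  replace (2 * m + 3)%nat with (2 * m + 1 + 2)%nat by lia.
  rewrite arc_int_xy_exact, gy_opp, gy_theta, Ropp_involutive by exact Hh.
  replace (2 * m + 1 + 2)%nat with (2 * (m + 1) + 1)%nat by lia.
  rewrite pow_opp_odd. ring.
Qed.

Lemma xy_moments_AB m : exists al G, WPoly 4 (2 * m + 2) G /\ forall h, 0 < h ->
  arc_int 1 (2 * m + 1) h (- theta h) (theta h)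
  = al * h ^ m * arc_int 1 1 h (- theta h) (theta h) + G h * 1.
Proof.
  destruct (wfun_odd_power m) as [G [HG HE]].
  set (c := INR (2 * m + 3)). assert (Hc : 0 < c) by (apply lt_0_INR; lia).
  exists (3 / c), (fun h => 2 / c * G h). split; [apply WPoly_scal, HG |].
  intros h Hh.
  pose proof (xy_moment_AB m h Hh) as Hm. pose proof (xy_moment_AB 0 h Hh) as H1.
  rewrite HE in Hm by exact Hh. fold c in Hm. simpl in H1.
  apply (Rmult_eq_reg_l c); [| lra]. rewrite Hm.
  replace (wfun h ^ 3) with ((1 + 1 + 1) * arc_int 1 1 h (- theta h) (theta h) / 2) by lra.
  field. lra.
Qed.

Theorem lemma2p2 (l m : nat) (hlm : (1 <= l + m)%nat) :
  exists (alpha beta gamma delta : R)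
         (phihat phitil psitil psicheck : nat -> nat -> R),
  forall h : R, 0 < h ->
    (let n := (2 * l + 2 * m)%nat in
     J_ij (2 * l) (2 * m) h =
       gamma * h ^ (n / 2) * J_ij 0 0 h
       + sum_f 2 n (fun k => polyR (phihat k) ((n - k) / 2) h
                             * (wfun h ^ k * sqrt (wfun h)))) /\
    (let n := (2 * l + 2 * m + 1)%nat in
     I_ij (2 * l) (2 * m + 1) h =
       alpha * h ^ ((n - 1) / 2) * I_ij 0 1 h
       + sum_f 3 n (fun k => polyR (phitil k) ((n - k) / 2) h
                             * (wfun h ^ k * sqrt (wfun h))) /\
     J_ij (2 * l) (2 * m + 1) h =
       delta * h ^ ((n - 1) / 2) * J_ij 0 1 h
       + sum_f 3 n (fun k => polyR (psitil k) ((n - k) / 2) h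
                             * (wfun h ^ k * sqrt (wfun h)))) /\
    (let n := (2 * l + 2 * m + 2)%nat in
     I_ij (2 * l + 1) (2 * m + 1) h =
       beta * h ^ ((n - 2) / 2) * I_ij 1 1 h
       + sum_f 4 n (fun k => polyR (psicheck k) ((n - k) / 2) h * wfun h ^ k)).
Proof.
  (* (i): J_{2l,2m} from the y-moments on BC (even exponents). *)
  destruct (x_reduction 0 0 0 2 theta (fun h => PI - theta h) _ _
              (y_moments 0 theta (fun h => PI - theta h) (-2) boundary_BC_even) l m)
    as [ga [G1 [HG1 HE1]]].
  (* (ii): I_{2l,2m+1} and J_{2l,2m+1} from the odd y-moments on AB and BC. *)
  destruct (x_reduction 0 1 1 3 (fun h => - theta h) theta _ _
              (y_moments 1 (fun h => - theta h) theta (-2) boundary_AB_odd) l m)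
    as [al [G2 [HG2 HE2]]].
  destruct (x_reduction 0 1 1 3 theta (fun h => PI - theta h) _ _
              (y_moments 1 theta (fun h => PI - theta h) 2 boundary_BC_odd) l m)
    as [de [G3 [HG3 HE3]]].
  (* (iii): I_{2l+1,2m+1} from the exact moments x y^(2m+1) on AB. *)
  destruct (x_reduction 1 1 2 4 (fun h => - theta h) theta _ _ xy_moments_AB l m)
    as [be [G4 [HG4 HE4]]].
  rewrite Nat.add_0_r in HG1.
  rewrite !Nat.add_0_r in HE1. rewrite Nat.add_0_r in HE2, HE3.
  destruct (WPoly_normal_form_factor _ _ _ (fun h => sqrt (wfun h)) HG1) as [c1 Hc1].
  destruct (WPoly_normal_form_factor _ _ _ (fun h => sqrt (wfun h)) HG2) as [c2 Hc2].
  destruct (WPoly_normal_form_factor _ _ _ (fun h => sqrt (wfun h)) HG3) as [c3 Hc3].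
  destruct (WPoly_normal_form _ _ _ HG4) as [c4 Hc4].
  exists al, be, ga, de, c1, c2, c3, c4. intros h Hh. cbv zeta.
  replace ((2 * l + 2 * m) / 2)%nat with (l + m)%nat by lia.
  replace ((2 * l + 2 * m + 1 - 1) / 2)%nat with (l + m)%nat by lia.
  replace ((2 * l + 2 * m + 2 - 2) / 2)%nat with (l + m)%nat by lia.
  unfold I_ij, J_ij; fold (theta h).
  rewrite <- Hc1, <- Hc2, <- Hc3, HE1, HE2, HE3, HE4, Hc4, Rmult_1_r by exact Hh.
  repeat split.
Qed.
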